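(* If $p\in\mathbb{C}[u,\mathbf{v}]$ satisfies $p_N\equiv0$ on $U(N)$ for every $N\ge1$, then $p$ is the zero polynomial.
   Context: $\mathbb{C}[u,\mathbf{v}]$ is the polynomial algebra over $\mathbb{C}$ in $u$ and $v_1,v_2,\dots$. For $p\in\mathbb{C}[u,\mathbf{v}]$, $p_N:U(N)\to M_N(\mathbb{C})$ is $p_N(U)=p(U,\mathrm{tr}(U),\mathrm{tr}(U^2),\dots)$, substituting $u=U$ and $v_j=\mathrm{tr}(U^j)I$, with $\mathrm{tr}(A)=\frac1N\sum_jA_{jj}$. *)

From HB Require Import structures.
From mathcomp Require Import all_boot all_order all_algebra.
Set Implicit Arguments. Unset Strict Implicit. Unset Printing Implicit Defensive.
Import Order.TTheory GRing.Theory Num.Theory.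
Local Open Scope ring_scope.

(* A monomial u^a v_1^{e_1} v_2^{e_2} ... is encoded as (a, [:: e_1; e_2; ...]);
   trailing zero exponents are irrelevant. *)
Definition monom := (nat * seq nat)%type.

(* Polynomials in C[u, v_1, v_2, ...]: finite formal sums of terms c * monomial. *)
Definition mpoly (C : Type) := seq (C * monom)%type.

Definition trim (s : seq nat) : seq nat :=
  rev (drop (find (fun x => x != 0%N) (rev s)) (rev s)).

Definition mcoef (C : nmodType) (p : mpoly C) (m : monom) : C :=
  \sum_(t <- p | (t.2.1 == m.1) && (trim t.2.2 == trim m.2)) t.1.

Definition mpoly_is_zero (C : nmodType) (p : mpoly C) : Prop :=
  forall m : monom, mcoef p m = 0.

Definition ntr (C : numClosedFieldType) (N : nat) (A : 'M[C]_N) : C :=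
  \tr A / N%:R.

(* p_N(U): substitute u = U and v_j = tr(U^j) I *)
Definition eval_term (C : numClosedFieldType) (N : nat) (U : 'M[C]_N)
  (t : C * monom) : 'M[C]_N :=
  (t.1 * \prod_(j < size t.2.2) (ntr (U ^+ j.+1)) ^+ (nth 0%N t.2.2 j))
    *: U ^+ t.2.1.

Definition peval (C : numClosedFieldType) (N : nat) (p : mpoly C)
  (U : 'M[C]_N) : 'M[C]_N :=
  \sum_(t <- p) eval_term U t.

Definition unitary (C : numClosedFieldType) (N : nat) (U : 'M[C]_N) : Prop :=
  U *m (map_mx Num.conj U)^T = 1%:M.

(* We only evaluate p_N at diagonal unitaries whose spectrum is a
   union of complete sets of l-th roots of unity, each set repeated with a
   chosen multiplicity.  For such a U the normalised traces are explicit: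
   tr(U^j) = F_m(j-1) / N, where N is the dimension and F_m(j-1) counts the
   blocks whose order divides j.  Reading off one diagonal entry of p_N(U)
   gives a scalar identity, and three separation steps, each an instance of
   "a polynomial with more roots than its degree is zero", peel it apart:
   1. varying one block multiplicity changes N (hence 1/N) but not the
      F_m(j) we care about, which separates the total degree in the v's;
   2. varying the diagonal entry over all M-th roots of unity separates the
      degree in u;
   3. the vectors (F_m(0), ..., F_m(K-1)) form a "triangular" family (each
      coordinate can be varied freely keeping the earlier ones fixed), which
      separates every single monomial in the v's. *)

From HB Require Import structures.
From mathcomp Require Import all_boot all_order all_algebra cyclic separable cyclotomic.
Set Implicit Arguments. Unset Strict Implicit. Unset Printing Implicit Defensive.
Import Order.TTheory GRing.Theory Num.Theory.
Local Open Scope ring_scope.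

Lemma trim_rcons s x : trim (rcons s x) = if x == 0%N then trim s else rcons s x.
Proof.
rewrite /trim rev_rcons; case: x => [|x] //=.
by rewrite rev_cons revK.
Qed.

Lemma nth_trim s j : nth 0%N (trim s) j = nth 0%N s j.
Proof.
elim/last_ind: s j => [|s x IH] j //.
rewrite trim_rcons nth_rcons; case: eqP => [->|_]; last by rewrite nth_rcons.
rewrite IH; case: ltngtP => // h; first by rewrite nth_default // ltnW.
by rewrite nth_default // h.
Qed.

Lemma trim_cat_nseq0 s k : trim (s ++ nseq k 0%N) = trim s.
Proof.
elim: k s => [|k IH] s; first by rewrite cats0.
by rewrite /= -cat_rcons IH trim_rcons.
Qed.

Lemma nth_cat_nseq0 s k j : nth 0%N (s ++ nseq k 0%N) j = nth 0%N s j.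
Proof.
rewrite nth_cat nth_nseq if_same; case: ltnP => // h.
by rewrite nth_default.
Qed.

Lemma trimP s e : reflect (forall j, nth 0%N s j = nth 0%N e j) (trim s == trim e).
Proof.
apply: (iffP eqP) => [h j | h]; first by rewrite -nth_trim h nth_trim.
rewrite -(trim_cat_nseq0 s (size e)) -(trim_cat_nseq0 e (size s)); congr trim.
apply: (@eq_from_nth _ 0%N) => [|j _]; first by rewrite !size_cat !size_nseq addnC.
by rewrite !nth_cat_nseq0.
Qed.

Lemma nth_take0 n s j : nth 0%N (take n s) j = if (j < n)%N then nth 0%N s j else 0%N.
Proof.
case: ltnP => h; first by rewrite nth_take.
by rewrite nth_default // size_take_min (leq_trans (geq_minl n _) h).
Qed.

Lemma trim_eq_split n s e : (trim s == trim e) =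
  [&& trim (take n s) == trim (take n e), nth 0%N s n == nth 0%N e n
    & trim (drop n.+1 s) == trim (drop n.+1 e)].
Proof.
apply/trimP/and3P => [h | [/trimP h1 /eqP h2 /trimP h3] j].
  split; last (by apply/trimP => j; rewrite !nth_drop); last by rewrite h.
  by apply/trimP => j; rewrite !nth_take0 h.
case: (ltngtP j n) => [lt | gt | ->] //; first by have := h1 j; rewrite !nth_take0 lt.
by have := h3 (j - n.+1)%N; rewrite !nth_drop subnKC.
Qed.

Definition vdeg (e : seq nat) : nat := (\sum_(j < size e) nth 0%N e j)%N.

Lemma vdeg_widen e L : (size e <= L)%N -> vdeg e = (\sum_(j < L) nth 0%N e j)%N.
Proof.
move=> le_eL; rewrite /vdeg (big_ord_widen L (fun j => nth 0%N e j)) //.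
rewrite big_mkcond /=; apply: eq_bigr => j _.
by case: ltnP => // le_ej; rewrite nth_default.
Qed.

Lemma vdeg_trim s e : trim s == trim e -> vdeg s = vdeg e.
Proof.
move/trimP=> eq_se; rewrite (@vdeg_widen s (size s + size e)) ?leq_addr //.
by rewrite (@vdeg_widen e (size s + size e)) ?leq_addl //; apply: eq_bigr.
Qed.

Section Separation.
Variable R : idomainType.

Lemma sum_by_degree_eq0 (T : eqType) (q : seq T) (w : T -> R) (g : T -> nat)
    (ys : seq R) :
  uniq ys -> (forall t, t \in q -> (g t < size ys)%N) ->
  (forall y, y \in ys -> \sum_(t <- q) w t * y ^+ g t = 0) ->
  forall d, \sum_(t <- q | g t == d) w t = 0.
Proof.
move=> uniq_ys g_small vanish d.
pose P := \sum_(t <- q) w t *: 'X^(g t).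
have coefP k : P`_k = \sum_(t <- q | g t == k) w t.
  rewrite coef_sum [RHS]big_mkcond /=; apply: eq_bigr => t _.
  by rewrite coefZ coefXn eq_sym; case: (g t == k); rewrite ?mulr1 ?mulr0.
suff P0 : P = 0 by rewrite -coefP P0 coef0.
have roots_ys : all (root P) ys.
  apply/allP => y /vanish sum0; apply/eqP; rewrite -[RHS]sum0 /P horner_sum.
  by apply: eq_bigr => t _; rewrite hornerZ hornerXn.
have size_P : (size P <= size ys)%N.
  apply/leq_sizeP => j le_j; rewrite coefP big1_seq // => t /andP[/eqP gt qt].
  by move: (g_small t qt); rewrite gt ltnNge le_j.
apply/eqP; apply: contraT => P_neq0.
by have := max_poly_roots P_neq0 roots_ys uniq_ys; rewrite ltnNge size_P.
Qed.

Definition mon_val (v : nat -> R) (e : seq nat) : R :=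
  \prod_(j < size e) v j ^+ nth 0%N e j.

Lemma mon_val_widen v e L : (size e <= L)%N ->
  mon_val v e = \prod_(j < L) v j ^+ nth 0%N e j.
Proof.
move=> le_eL; rewrite /mon_val (big_ord_widen L (fun j => v j ^+ nth 0%N e j)) //.
rewrite big_mkcond /=; apply: eq_bigr => j _.
by case: ltnP => // le_ej; rewrite nth_default // expr0.
Qed.

Lemma mon_val_take v e n : (size e <= n.+1)%N ->
  mon_val v e = mon_val v (take n e) * v n ^+ nth 0%N e n.
Proof.
move=> le_en; rewrite (mon_val_widen _ le_en) big_ord_recr /=.
rewrite (@mon_val_widen _ _ n) ?size_take_min ?geq_minl //; congr (_ * _).
by apply: eq_bigr => j _; rewrite nth_take.
Qed.

Lemma mon_val_scale v c e :
  mon_val (fun j => v j * c) e = mon_val v e * c ^+ vdeg e.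
Proof.
rewrite /mon_val /vdeg -prodrXr -big_split.
by apply: eq_bigr => j _; rewrite exprMn.
Qed.

Lemma mon_val_nil v : mon_val v [::] = 1.
Proof. by rewrite /mon_val big_ord0. Qed.

Section Triangular.
Variables (I : Type) (i0 : I) (F : I -> nat -> R) (K : nat).
Hypothesis F_rich : forall m i, (i < K)%N -> exists mk : nat -> I,
  (forall k j, (j < i)%N -> F (mk k) j = F m j) /\ injective (fun k => F (mk k) i).

Lemma split_last_coordinate n (q : seq (R * seq nat)) : (n < K)%N ->
  (forall t, t \in q -> (size t.2 <= n.+1)%N) ->
  (forall m, \sum_(t <- q) t.1 * mon_val (F m) t.2 = 0) ->
  forall d m, \sum_(t <- q | nth 0%N t.2 n == d) t.1 * mon_val (F m) (take n t.2) = 0.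
Proof.
move=> lt_nK size_q vanish d m; have [mk [mk_low mk_inj]] := F_rich m lt_nK.
pose B := (\max_(t <- q) nth 0%N t.2 n).+1.
apply: (@sum_by_degree_eq0 _ q _ (fun t => nth 0%N t.2 n) [seq F (mk k) n | k <- iota 0 B]).
- by rewrite map_inj_uniq ?iota_uniq.
- move=> t qt; rewrite size_map size_iota ltnS.
  exact: (@leq_bigmax_seq _ _ xpredT (fun t => nth 0%N t.2 n)).
move=> y /mapP[k _ ->]; rewrite -[RHS](vanish (mk k)) big_seq [RHS]big_seq.
apply: eq_bigr => t qt; rewrite [in RHS](mon_val_take _ (size_q t qt)) mulrA.
congr (_ * _ * _); apply: eq_bigr => j _; rewrite mk_low //.
by rewrite (leq_trans (ltn_ord j)) // size_take_min geq_minl.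
Qed.

Lemma coef_eq0_triangular n (q : seq (R * seq nat)) : (n <= K)%N ->
  (forall t, t \in q -> (size t.2 <= n)%N) ->
  (forall m, \sum_(t <- q) t.1 * mon_val (F m) t.2 = 0) ->
  forall e, \sum_(t <- q | trim t.2 == trim e) t.1 = 0.
Proof.
elim: n q => [|n IH] q le_nK size_q vanish e.
  have nil_q t : t \in q -> t.2 = [::] by move/size_q; rewrite leqn0 => /nilP.
  have sum_q : \sum_(t <- q) t.1 = 0.
    rewrite -[RHS](vanish i0) big_seq [RHS]big_seq.
    by apply: eq_bigr => t /nil_q ->; rewrite mon_val_nil mulr1.
  rewrite big_seq_cond (eq_bigl (fun t => (t \in q) && (trim [::] == trim e))) => [|t].
    by rewrite -big_seq_cond; case: eqP => _; [exact: sum_q | exact: big_pred0].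
  by case: (boolP (t \in q)) => // /nil_q ->.
have [drop_e0 | drop_e_neq0] := eqVneq (trim (drop n.+1 e)) [::]; last first.
  rewrite big1_seq // => t /andP[+ qt]; rewrite (trim_eq_split n) => /and3P[_ _].
  by rewrite drop_oversize ?size_q // => /eqP drop_e; rewrite -drop_e in drop_e_neq0.
have := IH [seq (t.1, take n t.2) | t <- q & nth 0%N t.2 n == nth 0%N e n]
  (ltnW le_nK) _ _ (take n e).
rewrite big_map big_filter_cond /= => sum_q'; rewrite -[RHS]sum_q'.
- rewrite big_seq_cond [RHS]big_seq_cond.
  apply: eq_bigl => t.
  case: (boolP (t \in q)) => //= qt; rewrite (trim_eq_split n) drop_oversize ?size_q //.
  by rewrite drop_e0 eqxx andbT andbC.
- by move=> u /mapP[t _ ->]; rewrite size_take_min geq_minl.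
move=> m; rewrite big_map big_filter /=.
exact: (split_last_coordinate le_nK size_q vanish).
Qed.

End Triangular.
End Separation.

Lemma big_iota0 (R : Type) (idx : R) (op : R -> R -> R) n (F : nat -> R) :
  \big[op/idx]_(l <- iota 0 n) F l = \big[op/idx]_(l < n) F l.
Proof. by rewrite -(big_mkord xpredT) /index_iota subn0. Qed.

Section RootsOfUnity.
Variable C : numClosedFieldType.

Lemma prim_root_exists n : (0 < n)%N -> exists z : C, n.-primitive_root z.
Proof.
pose P : {poly C} := 'X^n - 1; have [r Dp] := closed_field_poly_normal P.
move=> n_gt0; rewrite (monicP _) ?monicXnsubC // scale1r in Dp.
have rn1 : all n.-unity_root r by apply/allP=> z; rewrite -root_prod_XsubC -Dp.
have sz_r : (n < (size r).+1)%N.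
  by rewrite -(size_prod_XsubC r id) -Dp size_XnsubC.
have [|z] := hasP (has_prim_root n_gt0 rn1 _ sz_r); last by exists z.
by rewrite -separable_prod_XsubC -Dp separable_Xn_sub_1 // pnatr_eq0 -lt0n.
Qed.

Lemma zeta_spec n : exists z : C, (n == 0%N) || n.-primitive_root z.
Proof.
case: n => [|n]; first by exists 0.
by have [z z_prim] := prim_root_exists (ltn0Sn n); exists z; rewrite z_prim orbT.
Qed.

(* A chosen primitive n-th root of unity (0 when n = 0). *)
Definition zeta n : C := xchoose (zeta_spec n).

Lemma zetaP n : (0 < n)%N -> n.-primitive_root (zeta n).
Proof. by case: n => // n _; have := xchooseP (zeta_spec n.+1). Qed.

Definition unity_roots l : seq C := [seq zeta l ^+ i | i <- iota 0 l].

Lemma unity_roots_power_sum l j : (0 < l)%N ->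
  \sum_(z <- unity_roots l) z ^+ j = (l * (l %| j))%N%:R.
Proof.
move=> l_gt0; have zeta_prim := zetaP l_gt0.
rewrite big_map big_iota0.
under eq_bigr do rewrite exprAC.
case: (boolP (l %| j)%N) => [dvd_lj | ndvd_lj].
  have -> : zeta l ^+ j = 1.
    by rewrite -(divnK dvd_lj) mulnC exprM (prim_expr_order zeta_prim) expr1n.
  by rewrite muln1; under eq_bigr do rewrite expr1n; rewrite sumr_const card_ord.
have zj_neq1 : zeta l ^+ j != 1.
  by rewrite -(expr0 (zeta l)) (eq_prim_root_expr zeta_prim) mod0n.
have zj_root : (zeta l ^+ j) ^+ l = 1.
  by rewrite exprAC (prim_expr_order zeta_prim) expr1n.
have := subrX1 (zeta l ^+ j) l; rewrite zj_root subrr => /esym/eqP.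
by rewrite mulf_eq0 subr_eq0 (negbTE zj_neq1) /= muln0 => /eqP.
Qed.

Lemma unity_roots_norm l z : (0 < l)%N -> z \in unity_roots l -> z * z^* = 1.
Proof.
move=> l_gt0 /mapP[i _ ->]; have zeta_prim := zetaP l_gt0.
have norm_zeta : `|zeta l| = 1.
  by apply/eqP; rewrite -(pexpr_eq1 l_gt0) // -normrX (prim_expr_order zeta_prim) normr1.
by rewrite -normCK normrX norm_zeta !expr1n.
Qed.

Lemma uniq_unity_roots l : (0 < l)%N -> uniq (unity_roots l).
Proof.
move=> l_gt0; rewrite map_inj_in_uniq ?iota_uniq // => i j; rewrite !mem_iota /= => lt_i lt_j.
by move/eqP; rewrite (eq_prim_root_expr (zetaP l_gt0)) !modn_small // => /eqP.
Qed.

Lemma size_unity_roots l : size (unity_roots l) = l.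
Proof. by rewrite size_map size_iota. Qed.

End RootsOfUnity.

Section DiagonalTests.
Variable C : numClosedFieldType.

Definition diag_of (s : seq C) : 'M[C]_(size s) := diag_mx (\row_(i < size s) s`_i).

Lemma diag_of_exp s a : diag_of s ^+ a = diag_mx (\row_(i < size s) s`_i ^+ a).
Proof.
elim: a => [|a IH]; first by apply/matrixP => i j; rewrite !mxE expr0.
rewrite exprS IH /diag_of -mulmxE mulmx_diag; congr diag_mx.
by apply/matrixP => i j; rewrite !mxE exprS.
Qed.

Lemma diag_of_unitary s : (forall z, z \in s -> z * z^* = 1) -> unitary (diag_of s).
Proof.
move=> norm_s; rewrite /unitary /diag_of map_diag_mx tr_diag_mx mulmx_diag.
by apply/matrixP => i j; rewrite !mxE norm_s // mem_nth.
Qed.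

Lemma trace_diag_of_exp s j : \tr (diag_of s ^+ j) = \sum_(z <- s) z ^+ j.
Proof.
rewrite diag_of_exp mxtrace_diag [RHS](big_nth 0) big_mkord.
by apply: eq_bigr => i _; rewrite mxE.
Qed.

Lemma peval_diag_of (p : mpoly C) s (i : 'I_(size s)) :
  peval p (diag_of s) i i =
  \sum_(t <- p) t.1 * mon_val (fun j => ntr (diag_of s ^+ j.+1)) t.2.2 * s`_i ^+ t.2.1.
Proof.
rewrite /peval summxE; apply: eq_bigr => t _.
by rewrite /eval_term mxE diag_of_exp !mxE eqxx mulr1n.
Qed.

(* A block (l, k) stands for all l-th roots of unity, each repeated k times. *)
Definition block_spectrum (bs : seq (nat * nat)) : seq C :=
  flatten [seq flatten (nseq b.2 (unity_roots C b.1)) | b <- bs].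

Lemma sum_flatten_nseq (f : C -> C) k (r : seq C) :
  \sum_(z <- flatten (nseq k r)) f z = (\sum_(z <- r) f z) *+ k.
Proof. by elim: k => [|k IH]; rewrite ?big_nil ?mulr0n //= big_cat IH mulrS. Qed.

Lemma block_spectrum_power_sum bs j : all (fun b => 0 < b.1)%N bs ->
  \sum_(z <- block_spectrum bs) z ^+ j = (\sum_(b <- bs) b.2 * (b.1 * (b.1 %| j)))%N%:R.
Proof.
elim: bs => [|b bs IH]; first by rewrite /block_spectrum /= !big_nil.
move=> /= /andP[b_gt0 bs_gt0]; rewrite /block_spectrum /= big_cat /= -/(block_spectrum bs).
rewrite IH // big_cons natrD sum_flatten_nseq unity_roots_power_sum //.
by rewrite [in RHS]natrM mulr_natl.
Qed.

Lemma block_spectrum_norm bs z : all (fun b => 0 < b.1)%N bs ->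
  z \in block_spectrum bs -> z * z^* = 1.
Proof.
move=> /allP bs_gt0 /flattenP[s /mapP[b b_bs ->] /flattenP[r]].
rewrite mem_nseq => /andP[_ /eqP ->]; exact: unity_roots_norm (bs_gt0 b b_bs).
Qed.

Lemma size_block_spectrum bs : size (block_spectrum bs) = (\sum_(b <- bs) b.2 * b.1)%N.
Proof.
elim: bs => [|b bs IH]; first by rewrite big_nil.
rewrite /block_spectrum /= size_cat -/(block_spectrum bs) IH big_cons; congr (_ + _)%N.
by elim: b.2 => [|k IHk] //=; rewrite size_cat IHk size_map size_iota.
Qed.

End DiagonalTests.

Section TestFamily.
Variables (C : numClosedFieldType) (p : mpoly C).

Definition nvars : nat := \max_(t <- p) size t.2.2.

(* An order larger than nvars and than every u-degree of p: its block does
   not affect traces of U^j for j <= nvars and its roots separate u-degrees. *)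
Definition big_order : nat := (nvars + \max_(t <- p) t.2.1).+1.

Lemma size_le_nvars t : t \in p -> (size t.2.2 <= nvars)%N.
Proof. by move=> pt; apply: (@leq_bigmax_seq _ _ xpredT (fun t : C * monom => size t.2.2)). Qed.

Lemma udeg_lt_big_order t : t \in p -> (t.2.1 < big_order)%N.
Proof.
move=> pt; rewrite ltnS (leq_trans _ (leq_addl _ _)) //.
exact: (@leq_bigmax_seq _ _ xpredT (fun t : C * monom => t.2.1)).
Qed.

Definition test_blocks (m : nat -> nat) (s : nat) : seq (nat * nat) :=
  [seq (l.+1, m l) | l <- iota 0 nvars] ++ [:: (big_order, s.+1)].

Definition test_spectrum m s : seq C := block_spectrum C (test_blocks m s).

(* N * tr(U^(j+1)) for the test matrix, as a count of blocks. *)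
Definition trace_count (m : nat -> nat) (j : nat) : nat :=
  (\sum_(l < nvars) m l * (l.+1 * (l.+1 %| j.+1)))%N.

(* The size N of the test matrix; it grows strictly with s. *)
Definition test_dim (m : nat -> nat) (s : nat) : nat :=
  (\sum_(l < nvars) m l * l.+1 + s.+1 * big_order)%N.

Lemma test_blocks_pos m s : all (fun b => 0 < b.1)%N (test_blocks m s).
Proof. by rewrite all_cat all_map /=; apply/andP; split => //; apply/allP. Qed.

Lemma size_test_spectrum m s : size (test_spectrum m s) = test_dim m s.
Proof.
rewrite /test_spectrum size_block_spectrum big_cat big_map /= big_cons big_nil.
by rewrite big_iota0 addn0.
Qed.

(* Normalised traces of the test matrix: tr(U^(j+1)) = trace_count m j / N;
   the big block is invisible since big_order does not divide j+1. *)
Lemma ntr_test_spectrum m s j : (j < nvars)%N ->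
  ntr (diag_of (test_spectrum m s) ^+ j.+1) = (trace_count m j)%:R / (test_dim m s)%:R.
Proof.
move=> lt_j; rewrite /ntr trace_diag_of_exp block_spectrum_power_sum ?test_blocks_pos //.
rewrite size_test_spectrum big_cat big_map /= big_cons big_nil big_iota0.
by rewrite gtnNdvd ?muln0 ?addn0 // ltnS (leq_trans lt_j) // leq_addr.
Qed.

Lemma zeta_in_test_spectrum m s sg : (sg < big_order)%N ->
  zeta C big_order ^+ sg \in test_spectrum m s.
Proof.
move=> lt_sg; apply/flattenP; exists (flatten (nseq s.+1 (unity_roots C big_order))).
  by apply/mapP; exists (big_order, s.+1); rewrite // mem_cat mem_seq1 eqxx orbT.
apply/flattenP; exists (unity_roots C big_order); first by rewrite mem_nseq eqxx.
by apply/mapP; exists sg; rewrite ?mem_iota.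
Qed.

(* The trace counts form a triangular family: raising the multiplicity m i
   changes trace_count at i injectively but not below i, since l+1 | j+1
   forces l <= j. *)
Lemma trace_count_rich m i : (i < nvars)%N -> exists mk : nat -> (nat -> nat),
  (forall k j, (j < i)%N -> (trace_count (mk k) j)%:R = (trace_count m j)%:R :> C) /\
  injective (fun k => (trace_count (mk k) i)%:R : C).
Proof.
move=> lt_i; pose raise k l := if l == i then (m l + k)%N else m l.
exists (fun k => raise k); split => [k j lt_ji | k1 k2].
  congr (_%:R); apply: eq_bigr => l _; rewrite /raise.
  by case: eqP => // ->; rewrite gtnNdvd // !muln0.
have count_i k : trace_count (raise k) i = ((m i + k) * i.+1 +
    \sum_(l < nvars | l != Ordinal lt_i) m l * (l.+1 * (l.+1 %| i.+1)))%N.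
  rewrite /trace_count (bigD1 (Ordinal lt_i)) //= /raise eqxx dvdnn muln1; congr (_ + _)%N.
  apply: eq_bigr => l l_neq; suff /negbTE -> : (l : nat) != i by [].
  by apply: contraNneq l_neq => li; apply/eqP/val_inj.
move=> /= /eqP; rewrite eqr_nat !count_i eqn_add2r eqn_mul2r /= eqn_add2l.
by move/eqP.
Qed.

Hypothesis p_vanish : forall N, (0 < N)%N -> forall U : 'M[C]_N, unitary U -> peval p U = 0.

Lemma test_entry_eq0 m s sg : (sg < big_order)%N ->
  \sum_(t <- p) t.1 * mon_val (fun j => (trace_count m j)%:R / (test_dim m s)%:R) t.2.2
     * (zeta C big_order ^+ sg) ^+ t.2.1 = 0.
Proof.
move=> lt_sg; set sp := test_spectrum m s.
have ix : (index (zeta C big_order ^+ sg) sp < size sp)%N.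
  by rewrite index_mem zeta_in_test_spectrum.
have U_sp : unitary (diag_of sp).
  by apply: diag_of_unitary => z; apply: block_spectrum_norm (test_blocks_pos m s).
have peval0 := p_vanish (leq_ltn_trans (leq0n _) ix) U_sp.
have := congr1 (fun B : 'M[C]_(size sp) => B (Ordinal ix) (Ordinal ix)) peval0.
rewrite /= peval_diag_of mxE nth_index ?zeta_in_test_spectrum // => entry0.
rewrite -[RHS]entry0 big_seq [RHS]big_seq; apply: eq_bigr => t pt; congr (_ * _ * _).
apply: eq_bigr => j _; rewrite ntr_test_spectrum //.
exact: leq_trans (ltn_ord j) (size_le_nvars pt).
Qed.

(* Separation of the total v-degree, using the distinct values 1/N. *)
Lemma sum_fixed_vdeg_eq0 m sg k : (sg < big_order)%N ->
  \sum_(t <- p | vdeg t.2.2 == k) t.1 * mon_val (fun j => (trace_count m j)%:R) t.2.2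
     * (zeta C big_order ^+ sg) ^+ t.2.1 = 0.
Proof.
move=> lt_sg; apply: (@sum_by_degree_eq0 _ _ p _ (fun t => vdeg t.2.2)
  [seq (test_dim m s)%:R^-1 | s <- iota 0 (\max_(t <- p) vdeg t.2.2).+1]).
- rewrite map_inj_uniq ?iota_uniq // => s1 s2 /invr_inj /eqP.
  by rewrite eqr_nat /test_dim eqn_add2l eqn_mul2r /= => /eqP [].
- move=> t pt; rewrite size_map size_iota ltnS.
  exact: (@leq_bigmax_seq _ _ xpredT (fun t : C * monom => vdeg t.2.2)).
move=> y /mapP[s _ ->]; rewrite -[RHS](test_entry_eq0 m s lt_sg).
apply: eq_bigr => t _; rewrite (mon_val_scale (fun j => (trace_count m j)%:R)).
by rewrite mulrA mulrAC.
Qed.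

(* Separation of the u-degree, using the roots of unity of order big_order. *)
Lemma sum_fixed_degrees_eq0 m k a :
  \sum_(t <- p | (vdeg t.2.2 == k) && (t.2.1 == a))
     t.1 * mon_val (fun j => (trace_count m j)%:R) t.2.2 = 0.
Proof.
have big_order_gt0 : (0 < big_order)%N by [].
rewrite -big_filter_cond; apply: (@sum_by_degree_eq0 _ _ _ _ (fun t => t.2.1)
  (unity_roots C big_order)); first exact: uniq_unity_roots.
  by move=> t; rewrite mem_filter size_unity_roots => /andP[_ /udeg_lt_big_order].
move=> y /mapP[sg]; rewrite mem_iota /= => lt_sg ->.
by rewrite big_filter; apply: sum_fixed_vdeg_eq0.
Qed.

End TestFamily.

Unset Implicit Arguments.

Theorem mainTheorem13 (C : numClosedFieldType) (p : mpoly C) :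
  (forall (N : nat), (0 < N)%N ->
     forall U : 'M[C]_N, unitary U -> peval p U = 0) ->
  mpoly_is_zero p.
Proof.
move=> p_vanish [a e].
have := @coef_eq0_triangular C (nat -> nat) (fun _ => 0%N)
  (fun m j => (trace_count p m j)%:R) (nvars p) (@trace_count_rich C p) (nvars p)
  [seq (t.1, t.2.2) | t <- p & (vdeg t.2.2 == vdeg e) && (t.2.1 == a)] (leqnn _) _ _ e.
rewrite big_map big_filter_cond /mcoef => sum0; rewrite -[RHS]sum0.
- apply: eq_bigl => t /=; case: (boolP (trim t.2.2 == trim e)) => trim_t; rewrite ?andbF //.
  by rewrite (vdeg_trim trim_t) eqxx.
- by move=> u /mapP[t]; rewrite mem_filter => /andP[_ /size_le_nvars] ? ->.
by move=> m; rewrite big_map big_filter; apply: sum_fixed_degrees_eq0.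
Qed.
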